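(* Let $\mathbb F$ be a field and let $D$ be an $m\times m$ differential matrix over $\mathbb F$. Then there exist an almost-Jordan differential matrix $\underline D$ and a triangular matrix $B$ (both $m\times m$ over $\mathbb F$) such that $D = B\,\underline D\,B^{-1}$.
   Context: A differential matrix is a square matrix $D$ with $D^2=0$. A differential matrix is Jordan if it is block-diagonal with every diagonal block equal to either the $1\times 1$ zero matrix $J=[0]$ or the $2\times 2$ matrix $K=\begin{bmatrix}0&1\\0&0\end{bmatrix}$. A differential matrix $\underline D$ is almost-Jordan if there is a permutation matrix $P$ such that $P^{-1}\underline D P$ is Jordan. A square matrix is called triangular if it is upper-triangular and invertible. *)

From HB Require Import structures.
From mathcomp Require Import all_boot all_order all_algebra all_fingroup.
Set Implicit Arguments. Unset Strict Implicit. Unset Printing Implicit Defensive.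
Import GRing.Theory.
Local Open Scope ring_scope.

Definition differential (F : fieldType) (m : nat) (D : 'M[F]_m) : Prop :=
  D *m D = 0.

(* The block-diagonal matrix with diagonal blocks given by the sequence of
   block sizes [s] (each block size is 1 for J = [0], or 2 for
   K = [[0,1],[0,0]]). *)
Definition jordan_of (F : fieldType) (m : nat) (s : seq nat) : 'M[F]_m :=
  \matrix_(i < m, j < m)
    (if [exists k : 'I_(size s),
           [&& nth 0%N s k == 2%N, sumn (take k s) == i & j == i.+1 :> nat]]
     then 1 else 0).

Definition jordan (F : fieldType) (m : nat) (D : 'M[F]_m) : Prop :=
  exists s : seq nat,
    [/\ all (fun b => (b == 1%N) || (b == 2%N)) s, sumn s = m & D = jordan_of F m s].

Definition almost_jordan (F : fieldType) (m : nat) (D : 'M[F]_m) : Prop :=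
  exists sigma : 'S_m, jordan (invmx (perm_mx sigma) *m D *m perm_mx sigma).

Definition triangular (F : fieldType) (m : nat) (B : 'M[F]_m) : Prop :=
  (forall i j : 'I_m, (j < i)%N -> B i j = 0) /\ B \in unitmx.

From mathcomp Require Import all_boot all_order all_algebra all_fingroup.
Set Implicit Arguments. Unset Strict Implicit. Unset Printing Implicit Defensive.
Import GRing.Theory.
Local Open Scope ring_scope.

(* Conjugating by upper triangular matrices, we aim for a matrix sending each
   basis vector either to 0 or to another basis vector, along a partial
   matching [f] (no index is both a source and a target), and argue by
   induction on the size.  If [D e_0 = 0], the map induced on the quotient by
   [e_0] is handled by induction; lifting back leaves one unknown row [w],
   where [D] maps into [e_0].  Row operations towards the first index clear
   [w] on the sources of [f]; then the first index [j0] with [w j0 != 0] is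
   unmatched, and rescaling [e_j0] so that it maps to [e_0] adds the edge
   [j0 -> 0] and kills the rest of [w].  If [D e_0 != 0], replacing [e_a] by
   [D e_0], for [a] the last row with [D a 0 != 0], gives [D e_0 = e_a] and
   [D e_a = 0]; the same argument on the quotient by [e_a] ends with the edge
   [0 -> a].  Finally, listing the matched pairs first turns a matching
   matrix into a Jordan one by a permutation. *)

Section DifferentialMatrices.

Variable F : fieldType.

Definition upper_trig_nzdiag m (B : 'M[F]_m) :=
  (forall i j : 'I_m, (j < i)%N -> B i j = 0) /\ (forall i, B i i != 0).

Lemma utrig1 m : upper_trig_nzdiag (1%:M : 'M[F]_m).
Proof.
split=> [i j ji|i]; rewrite mxE; last by rewrite eqxx oner_neq0.
by case: eqP ji => // ->; rewrite ltnn.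
Qed.

Lemma utrig_mul m (A B : 'M[F]_m) :
  upper_trig_nzdiag A -> upper_trig_nzdiag B -> upper_trig_nzdiag (A *m B).
Proof.
move=> [A1 A2] [B1 B2]; split.
  move=> i j ji; rewrite mxE big1 // => l _.
  case: (ltnP l i) => li; first by rewrite A1 // mul0r.
  by rewrite B1 ?mulr0 // (leq_trans ji li).
move=> i; rewrite mxE (bigD1 i) //= big1 ?addr0 ?mulf_neq0 //.
move=> l /negbTE nli; case: (ltngtP l i) => li; first by rewrite A1 // mul0r.
  by rewrite B1 // mulr0.
by move: nli; rewrite (val_inj li) eqxx.
Qed.

Lemma utrig_unitmx m (B : 'M[F]_m) : upper_trig_nzdiag B -> B \in unitmx.
Proof.
move=> [B1 B2]; rewrite unitmxE -det_tr det_trig.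
  by rewrite unitfE; apply/prodf_neq0 => i _; rewrite mxE.
by apply/is_trig_mxP => i j ij; rewrite mxE B1.
Qed.

Lemma utrig_triangular m (B : 'M[F]_m) : upper_trig_nzdiag B -> triangular B.
Proof. by move=> UB; split; [case: UB | exact: utrig_unitmx]. Qed.

Definition utrig_similar m (D M : 'M[F]_m) :=
  exists2 B, upper_trig_nzdiag B & D *m B = B *m M.

Lemma utrig_similar_refl m (D : 'M[F]_m) : utrig_similar D D.
Proof. by exists 1%:M; rewrite ?mulmx1 ?mul1mx //; apply: utrig1. Qed.

Lemma utrig_similar_trans m (D N M : 'M[F]_m) :
  utrig_similar D N -> utrig_similar N M -> utrig_similar D M.
Proof.
move=> [B UB eB] [E UE eE]; exists (B *m E); first exact: utrig_mul.
by rewrite mulmxA eB -mulmxA eE mulmxA.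
Qed.

Lemma similar_sqr0 m (D N B : 'M[F]_m) :
  B \in unitmx -> D *m B = B *m N -> D *m D = 0 -> N *m N = 0.
Proof.
move=> uB eB DD; have BNN : B *m (N *m N) = 0.
  by rewrite mulmxA -eB -mulmxA -eB mulmxA DD mul0mx.
by rewrite -(mulKmx uB (N *m N)) BNN mulmx0.
Qed.

Lemma sum_mul_if_eq n (G : 'I_n -> F) k c :
  \sum_l G l * (if l == k then c else 0) = G k * c.
Proof.
rewrite (bigD1 k) //= eqxx big1 ?addr0 // => l /negbTE ->; exact: mulr0.
Qed.

Definition matching m (f : 'I_m -> option 'I_m) :=
  (forall j a, f j = Some a -> f a = None) /\
  (forall i j a, f i = Some a -> f j = Some a -> i = j).

Definition isolated m (f : 'I_m -> option 'I_m) t :=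
  f t = None /\ forall j, f j != Some t.

Definition matching_mx m (f : 'I_m -> option 'I_m) : 'M[F]_m :=
  \matrix_(i, j) if f j == Some i then 1 else 0.

Definition matching_mx_row m (f : 'I_m -> option 'I_m) t (w : 'I_m -> F) : 'M[F]_m :=
  \matrix_(i, j) if i == t then w j else matching_mx f i j.

Lemma matching_mx_sqr0 m (f : 'I_m -> option 'I_m) :
  matching f -> matching_mx f *m matching_mx f = 0.
Proof.
move=> [tgt_free _]; apply/matrixP => i j; rewrite !mxE big1 // => l _.
rewrite !mxE; case: eqP => [fl|]; last by rewrite mul0r.
case: eqP => [fj|]; last by rewrite mulr0.
by move: (tgt_free _ _ fj); rewrite fl.
Qed.

Lemma sum_mul_matching_mx m (f : 'I_m -> option 'I_m) (y : 'I_m -> F) j :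
  \sum_l y l * matching_mx f l j = oapp y 0 (f j).
Proof.
case fj: (f j) => [a|] /=.
  rewrite -[y a]mulr1 -(sum_mul_if_eq y); apply: eq_bigr => l _.
  by rewrite mxE fj (inj_eq (@Some_inj _)) eq_sym.
by rewrite big1 // => l _; rewrite mxE fj mulr0.
Qed.

Lemma matching_mx_rowE m (f : 'I_m -> option 'I_m) t w i j :
  isolated f t ->
  matching_mx_row f t w i j = matching_mx f i j + (if i == t then w j else 0).
Proof.
move=> [_ not_tgt]; rewrite mxE; case: (i =P t) => [->|_]; last by rewrite addr0.
by rewrite mxE (negbTE (not_tgt j)) add0r.
Qed.

Lemma matching_mx_row_sqr0 m (f : 'I_m -> option 'I_m) t w :
  isolated f t -> matching_mx_row f t w *m matching_mx_row f t w = 0 ->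
  w t = 0 /\ forall j a, f j = Some a -> w a = 0.
Proof.
move=> ft NN; have rowt j : oapp w 0 (f j) + w t * w j = 0.
  transitivity ((matching_mx_row f t w *m matching_mx_row f t w) t j).
    rewrite mxE; under eq_bigr do
      rewrite [matching_mx_row _ _ _ t _]mxE eqxx matching_mx_rowE // mulrDr.
    by rewrite big_split /= sum_mul_matching_mx sum_mul_if_eq.
  by rewrite NN mxE.
have wt : w t = 0.
  by have := rowt t; rewrite ft.1 add0r -expr2 => /eqP; rewrite expf_eq0 => /andP[_ /eqP].
by split=> // j a fj; have := rowt j; rewrite fj wt mul0r addr0.
Qed.

Definition add_row_mx m (k : 'I_m) (y : 'I_m -> F) : 'M[F]_m :=
  1%:M + \matrix_(i, j) if i == k then y j else 0.

Lemma mulmx_add_row m (A : 'M[F]_m) k y i j :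
  (A *m add_row_mx k y) i j = A i j + A i k * y j.
Proof.
rewrite mulmxDr mulmx1 mxE [in X in _ + X]mxE.
by under eq_bigr do rewrite mxE; rewrite sum_mul_if_eq.
Qed.

Lemma add_row_mulmx m (A : 'M[F]_m) k y i j :
  (add_row_mx k y *m A) i j = A i j + (if i == k then \sum_l y l * A l j else 0).
Proof.
rewrite mulmxDl mul1mx mxE [in X in _ + X]mxE; congr (_ + _).
by under eq_bigr do rewrite mxE; case: eqP => // _; rewrite big1 // => l _; rewrite mul0r.
Qed.

Lemma add_row_utrig m (k : 'I_m) y :
  (forall j : 'I_m, (j < k)%N -> y j = 0) -> 1 + y k != 0 ->
  upper_trig_nzdiag (add_row_mx k y).
Proof.
move=> y_lt yk; split=> [i j ji|i]; rewrite !mxE.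
  rewrite -(inj_eq val_inj) (gtn_eqF ji) add0r; case: (i =P k) => // ik.
  by apply: y_lt; rewrite -ik.
by rewrite eqxx; case: (i =P k) => [->//|_]; rewrite addr0 oner_neq0.
Qed.

(* Replacing each target [e_a], [f j = Some a], by [e_a + w j e_t] absorbs the
   [e_t]-component of the image of [e_j]; this is triangular as [t] comes first. *)
Lemma clear_row_sources m (f : 'I_m -> option 'I_m) t w :
  matching f -> isolated f t -> w t = 0 -> (forall k : 'I_m, (t <= k)%N) ->
  utrig_similar (matching_mx_row f t w)
                (matching_mx_row f t (fun j => if f j is Some _ then 0 else w j)).
Proof.
move=> [_ f_inj] ft wt t_min.
pose x j := \sum_l matching_mx f j l * w l.
have x_tgt j a : f j = Some a -> x a = w j.
  move=> fj; rewrite /x (bigD1 j) //= mxE fj eqxx mul1r big1 ?addr0 // => l nlj.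
  rewrite mxE; case: (f l =P Some a) => [fl|]; last by rewrite mul0r.
  by move: nlj; rewrite (f_inj _ _ _ fl fj) eqxx.
have xt : x t = 0 by rewrite /x big1 // => l _; rewrite mxE (negbTE (ft.2 l)) mul0r.
exists (add_row_mx t x).
  by apply: add_row_utrig => [j|]; rewrite ?ltnNge ?t_min // xt addr0 oner_neq0.
apply/matrixP => i j; rewrite mulmx_add_row add_row_mulmx.
under eq_bigr do rewrite matching_mx_rowE // mulrDr.
rewrite big_split /= sum_mul_matching_mx sum_mul_if_eq xt mul0r addr0.
have -> : matching_mx_row f t w i t = 0 by rewrite matching_mx_rowE // mxE ft.1 wt if_same addr0.
rewrite mul0r addr0 !matching_mx_rowE //.
case: (i =P t) => _; last by rewrite !addr0.
by case fj: (f j) => [a|] /=; rewrite ?(x_tgt _ _ fj) addr0.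
Qed.

Definition add_edge m (f : 'I_m -> option 'I_m) j0 t :=
  fun j => if j == j0 then Some t else f j.

Lemma matching_add_edge m (f : 'I_m -> option 'I_m) j0 t :
  matching f -> isolated f t -> f j0 = None -> (forall j, f j != Some j0) ->
  t != j0 -> matching (add_edge f j0 t).
Proof.
move=> [tgt_free f_inj] [ft t_not_tgt] fj0 j0_not_tgt tj0; split.
  move=> j a; rewrite /add_edge; case: (j =P j0) => _.
    by move=> [<-]; rewrite (negbTE tj0).
  move=> fj; have /negbTE -> : a != j0 by apply: contra_neq (j0_not_tgt j) => <-; rewrite fj.
  exact: tgt_free fj.
move=> i j a; rewrite /add_edge; case: (i =P j0) => [->|_]; case: (j =P j0) => [->|_] //.
- by move=> [<-] fj; move: (t_not_tgt j); rewrite fj eqxx.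
- by move=> fi [ea]; move: (t_not_tgt i); rewrite fi ea eqxx.
- exact: f_inj.
Qed.

(* Rescaling [e_j0] to [e_j0 / w j0] makes it map to [e_t], and subtracting
   multiples of it from the later basis vectors removes their [e_t]-components. *)
Lemma absorb_row m (f : 'I_m -> option 'I_m) t j0 w :
  isolated f t -> w t = 0 -> (forall j a, f j = Some a -> w a = 0) ->
  f j0 = None -> w j0 != 0 -> (forall k : 'I_m, (k < j0)%N -> w k = 0) ->
  utrig_similar (matching_mx_row f t w) (matching_mx (add_edge f j0 t)).
Proof.
move=> ft wt w_tgt fj0 wj0 w_lt.
have tj0 : t != j0 by apply: contraNneq wj0 => <-; rewrite wt.
pose y j := ((if j == j0 then 1 else 0) - w j) / w j0.
have y_edge j : oapp y 0 (add_edge f j0 t j) = 0.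
  rewrite /add_edge /y; case: (j =P j0) => _ /=; first by rewrite (negbTE tj0) wt subr0 mul0r.
  case fj: (f j) => [a|] //=; have /negbTE -> : a != j0.
    by apply: contraNneq wj0 => <-; rewrite (w_tgt _ _ fj).
  by rewrite (w_tgt _ _ fj) subr0 mul0r.
exists (add_row_mx j0 y).
  apply: add_row_utrig => [k kj0|].
    by rewrite /y -(inj_eq val_inj) (ltn_eqF kj0) w_lt // subr0 mul0r.
  rewrite /y eqxx -{1}(divff wj0) -mulrDl addrC subrK mul1r invr_eq0 //.
apply/matrixP => i j.
rewrite mulmx_add_row add_row_mulmx sum_mul_matching_mx y_edge if_same addr0.
rewrite !matching_mx_rowE // ![matching_mx _ _ _]mxE fj0 add0r /add_edge.
case: (i =P t) => [->|/eqP it].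
  rewrite /y mulrCA divff // mulr1 -addrA [w j + _]addrC subrK (negbTE (ft.2 j)).
  by case: (j =P j0) => _; rewrite ?eqxx ?(negbTE (ft.2 j)) add0r.
rewrite mul0r !addr0; case: (j =P j0) => [->|_] //.
by rewrite fj0 (inj_eq (@Some_inj _)) (eq_sym t) (negbTE it).
Qed.

Lemma normalize_row m (f : 'I_m -> option 'I_m) t w :
  matching f -> isolated f t -> w t = 0 -> (forall j a, f j = Some a -> w a = 0) ->
  (forall j, w j != 0 -> (forall k : 'I_m, (k < j)%N -> w k = 0) -> f j = None) ->
  exists2 g, matching g & utrig_similar (matching_mx_row f t w) (matching_mx g).
Proof.
move=> mf ft wt w_tgt w_first.
case: (pickP (fun j => w j != 0)) => [j1 wj1 | w0]; last first.
  exists f => //; have -> : matching_mx_row f t w = matching_mx f.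
    apply/matrixP => i j; rewrite matching_mx_rowE //.
    by move/negbFE/eqP: (w0 j) => ->; rewrite if_same addr0.
  exact: utrig_similar_refl.
case: (@arg_minnP _ j1 (fun j => w j != 0) val wj1) => j0 wj0 j0_min.
have w_lt (k : 'I_m) : (k < j0)%N -> w k = 0.
  by move=> kj0; apply/eqP; apply: contraTT kj0 => wk; rewrite -leqNgt j0_min.
have fj0 := w_first _ wj0 w_lt.
exists (add_edge f j0 t); last exact: absorb_row.
apply: matching_add_edge => // [j|]; first by apply: contraNneq wj0 => /w_tgt ->.
by apply: contraNneq wj0 => <-; rewrite wt.
Qed.

Definition insert_mx n (t : 'I_n.+1) (B : 'M[F]_n) : 'M[F]_n.+1 :=
  \matrix_(i, j) match unlift t i, unlift t j with
                 | Some i', Some j' => B i' j'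
                 | _, _ => if i == j then 1 else 0
                 end.

Lemma insert_mx_lift n t (B : 'M[F]_n) i j : insert_mx t B (lift t i) (lift t j) = B i j.
Proof. by rewrite mxE !liftK. Qed.

Lemma insert_mx_t_lift n t (B : 'M[F]_n) j : insert_mx t B t (lift t j) = 0.
Proof. by rewrite mxE unlift_none (negbTE (neq_lift _ _)). Qed.

Lemma insert_mx_lift_t n t (B : 'M[F]_n) i : insert_mx t B (lift t i) t = 0.
Proof. by rewrite mxE unlift_none liftK eq_sym (negbTE (neq_lift _ _)). Qed.

Lemma insert_mx_tt n t (B : 'M[F]_n) : insert_mx t B t t = 1.
Proof. by rewrite mxE unlift_none eqxx. Qed.

Lemma insert_mx_col n t (B : 'M[F]_n) : col t (insert_mx t B) = delta_mx t 0.
Proof.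
apply/matrixP => i k; rewrite !mxE (ord1 k) eqxx andbT unlift_none.
by case: (unlift t i); case: eqP.
Qed.

Lemma utrig_insert n t (B : 'M[F]_n) :
  upper_trig_nzdiag B -> upper_trig_nzdiag (insert_mx t B).
Proof.
move=> [B_low B_diag]; split.
  move=> i j; case: (unliftP t i) => [i'|] ->; case: (unliftP t j) => [j'|] ->;
    rewrite ?insert_mx_lift ?insert_mx_t_lift ?insert_mx_lift_t ?ltnn //=.
  by rewrite ltnNge leq_bump2 -ltnNge => /B_low.
by move=> i; case: (unliftP t i) => [i'|] ->; rewrite ?insert_mx_lift ?insert_mx_tt ?oner_neq0.
Qed.

Definition insert_matching n (t : 'I_n.+1) (f : 'I_n -> option 'I_n) :=
  fun j => if unlift t j is Some j' then omap (lift t) (f j') else None.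

Lemma insert_matching_lift n t (f : 'I_n -> option 'I_n) j :
  insert_matching t f (lift t j) = omap (lift t) (f j).
Proof. by rewrite /insert_matching liftK. Qed.

Lemma insert_matching_isolated n t (f : 'I_n -> option 'I_n) :
  isolated (insert_matching t f) t.
Proof.
split=> [|j]; first by rewrite /insert_matching unlift_none.
rewrite /insert_matching; case: unliftP => [j'|] _ //; case: (f j') => //= a.
by rewrite (inj_eq (@Some_inj _)) eq_sym neq_lift.
Qed.

Lemma matching_insert n t (f : 'I_n -> option 'I_n) :
  matching f -> matching (insert_matching t f).
Proof.
have [ft _] := insert_matching_isolated t f.
move=> [tgt_free f_inj]; split.
  move=> j a; case: (unliftP t j) => [j'|] ->; rewrite ?ft // insert_matching_lift.
  by case fj: (f j') => [a'|] //= [<-]; rewrite insert_matching_lift (tgt_free _ _ fj).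
move=> i j a; case: (unliftP t i) => [i'|] ->; rewrite ?ft // insert_matching_lift.
case: (unliftP t j) => [j'|] ->; rewrite ?ft // insert_matching_lift.
case fi: (f i') => [b|] //; case fj: (f j') => [c|] //= [<-] /Some_inj/lift_inj cb.
by rewrite (f_inj _ _ _ fi (etrans fj (congr1 Some cb))).
Qed.

Lemma matching_mx_insert n t (f : 'I_n -> option 'I_n) i j :
  matching_mx (insert_matching t f) (lift t i) (lift t j) = matching_mx f i j.
Proof.
rewrite !mxE insert_matching_lift; case: (f j) => [a|] //=.
by rewrite (inj_eq (@Some_inj _)) (inj_eq (@Some_inj _)) (inj_eq lift_inj).
Qed.

Lemma row'_col'_sqr0 n t (D : 'M[F]_n.+1) :
  (forall i, D i t = 0) -> D *m D = 0 -> row' t (col' t D) *m row' t (col' t D) = 0.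
Proof.
move=> Dt DD; apply/matrixP => i j.
have := congr1 (fun M : 'M_n.+1 => M (lift t i) (lift t j)) DD.
rewrite !mxE (bigD1_ord t) //= Dt mul0r add0r => DDij.
by rewrite -[RHS]DDij; apply: eq_bigr => l _; rewrite !mxE.
Qed.

(* When [D e_t = 0], [row' t (col' t D)] is the map induced on the quotient by
   [e_t], and a conjugation of it lifts to [D] up to the row [t]. *)
Lemma mulmx_insert n t (D : 'M[F]_n.+1) (B : 'M[F]_n) f :
  (forall i, D i t = 0) -> row' t (col' t D) *m B = B *m matching_mx f ->
  D *m insert_mx t B =
  insert_mx t B *m matching_mx_row (insert_matching t f) t (fun j => (D *m insert_mx t B) t j).
Proof.
move=> Dt eB; have [ft _] := insert_matching_isolated t f.
have lift_neq_t l : (lift t l == t) = false by rewrite eq_sym (negbTE (neq_lift _ _)).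
apply/matrixP => i j; case: (unliftP t i) => [i'|] ->; last first.
  rewrite [RHS]mxE (bigD1_ord t) //= insert_mx_tt mul1r [matching_mx_row _ _ _ t j]mxE eqxx.
  rewrite big1 ?addr0 //.
  by move=> l _; rewrite insert_mx_t_lift mul0r.
rewrite !mxE !(bigD1_ord t) //= Dt mul0r add0r insert_mx_lift_t mul0r add0r.
case: (unliftP t j) => [j'|] ->; last first.
  rewrite big1 => [|l _]; last by rewrite insert_mx_lift_t mulr0.
  rewrite big1 // => l _.
  by rewrite [matching_mx_row _ _ _ _ _]mxE lift_neq_t [matching_mx _ _ _]mxE ft mulr0.
have := congr1 (fun M : 'M_n => M i' j') eB; rewrite !mxE => eBij.
transitivity (\sum_l row' t (col' t D) i' l * B l j').
  by apply: eq_bigr => l _; rewrite insert_mx_lift !mxE.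
rewrite eBij; apply: eq_bigr => l _.
by rewrite insert_mx_lift [matching_mx_row _ _ _ _ _]mxE lift_neq_t matching_mx_insert.
Qed.

Lemma utrig_col0 n (B : 'M[F]_n.+1) :
  upper_trig_nzdiag B -> col 0 B = B 0 0 *: delta_mx 0 0.
Proof.
move=> [B_low _]; apply/matrixP => i k; rewrite !mxE (ord1 k) eqxx andbT.
by case: (i =P 0) => [->|/eqP i0]; rewrite ?mulr1 // B_low ?mulr0 // lt0n.
Qed.

(* Replacing the basis vector [e_a] by [D e_0], where [a] is the last row
   with [D a 0 != 0], is an upper triangular change of basis. *)
Lemma similar_first_col_delta n (D : 'M[F]_n.+1) a0 :
  D *m D = 0 -> D a0 0 != 0 ->
  exists (a : 'I_n.+1) (D1 : 'M_n.+1),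
    [/\ utrig_similar D D1, D1 *m D1 = 0 & col 0 D1 = delta_mx a 0].
Proof.
move=> DD Da0; case: (@arg_maxnP _ a0 (fun i => D i 0 != 0) val Da0) => a Da a_max.
have D_gt (i : 'I_n.+1) : (a < i)%N -> D i 0 = 0.
  by move=> ai; apply/eqP; apply: contraTT ai => Di; rewrite -leqNgt; apply: a_max.
have a_neq0 : a != 0.
  apply: contraNneq Da => a_eq0; have := congr1 (fun M : 'M_n.+1 => M 0 0) DD.
  rewrite !mxE (bigD1 0) //= big1 => [|l l0]; last by rewrite D_gt ?mulr0 // a_eq0 lt0n.
  by rewrite addr0 a_eq0 => /eqP; rewrite mulf_eq0 orbb.
pose E : 'M[F]_n.+1 := \matrix_(i, j) if j == a then D i 0 else if i == j then 1 else 0.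
have UE : upper_trig_nzdiag E.
  split=> [i j ji|i]; rewrite mxE; last by case: (i =P a) => [->//|_]; rewrite eqxx oner_neq0.
  case: (j =P a) => [ja|_]; first by rewrite D_gt // -ja.
  by rewrite -(inj_eq val_inj) (gtn_eqF ji).
have uE := utrig_unitmx UE.
have eD : D *m E = E *m (invmx E *m D *m E) by rewrite !mulmxA mulmxV // mul1mx.
exists a, (invmx E *m D *m E); split; first by exists E.
  exact: similar_sqr0 uE eD DD.
have colE0 : col 0 E = delta_mx 0 0.
  apply/matrixP => i k; rewrite !mxE eq_sym (negbTE a_neq0) (ord1 k) eqxx andbT.
  by case: eqP.
have colEa : col a E = col 0 D by apply/matrixP => i k; rewrite !mxE eqxx.
apply: (can_inj (mulKmx uE)); rewrite colE mulmxA -eD -mulmxA -!colE.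
by rewrite colE0 -colE colEa.
Qed.

Section InductionStep.

Variable n : nat.
Hypothesis IH : forall D : 'M[F]_n,
  D *m D = 0 -> exists2 f, matching f & utrig_similar D (matching_mx f).

Lemma zero_column_row_form (D : 'M[F]_n.+1) t :
  D *m D = 0 -> (forall i, D i t = 0) ->
  exists B f w, [/\ upper_trig_nzdiag B, col t B = delta_mx t 0, matching f,
    isolated f t & D *m B = B *m matching_mx_row f t w].
Proof.
move=> DD Dt; have [f mf [B UB eB]] := IH (row'_col'_sqr0 Dt DD).
exists (insert_mx t B), (insert_matching t f), (fun j => (D *m insert_mx t B) t j).
split; [exact: utrig_insert | exact: insert_mx_col | exact: matching_insert |
        exact: insert_matching_isolated | exact: mulmx_insert].
Qed.

Lemma zero_first_column (D : 'M[F]_n.+1) :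
  D *m D = 0 -> (forall i, D i 0 = 0) ->
  exists2 f, matching f & utrig_similar D (matching_mx f).
Proof.
move=> DD D0; have [B [f [w [UB _ mf ft eB]]]] := zero_column_row_form DD D0.
have [wt w_tgt] := matching_mx_row_sqr0 ft (similar_sqr0 (utrig_unitmx UB) eB DD).
have [[tgt_free _] [ft0 _]] := (mf, ft).
pose w' j := if f j is Some _ then 0 else w j.
have [g mg sim_g] : exists2 g, matching g &
    utrig_similar (matching_mx_row f 0 w') (matching_mx g).
  apply: normalize_row => //; rewrite /w'.
  - by rewrite ft0.
  - by move=> j a fj; rewrite (tgt_free _ _ fj) (w_tgt _ _ fj).
  - by move=> j; case: (f j) => // ?; rewrite eqxx.
exists g => //; apply: (utrig_similar_trans (N := matching_mx_row f 0 w)); first by exists B.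
by apply: utrig_similar_trans sim_g; apply: clear_row_sources.
Qed.

Lemma nonzero_first_column (D : 'M[F]_n.+1) a0 :
  D *m D = 0 -> D a0 0 != 0 ->
  exists2 f, matching f & utrig_similar D (matching_mx f).
Proof.
move=> DD Da0; have [a [D1 [simD1 D1D1 col0D1]]] := similar_first_col_delta DD Da0.
have D1a i : D1 i a = 0.
  have : col a D1 = 0 by rewrite colE -col0D1 colE mulmxA D1D1 mul0mx.
  by move/matrixP/(_ i 0); rewrite !mxE.
have [B [f [w [UB colB mf ft eB]]]] := zero_column_row_form D1D1 D1a.
have uB := utrig_unitmx UB.
have [wa w_tgt] := matching_mx_row_sqr0 ft (similar_sqr0 uB eB D1D1).
have colN : col 0 (matching_mx_row f a w) = B 0 0 *: delta_mx a 0.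
  apply: (can_inj (mulKmx uB)); rewrite -scalemxAr -colE colB.
  by rewrite colE mulmxA -eB -mulmxA -colE utrig_col0 // -scalemxAr -colE col0D1.
have N_col0 l : matching_mx_row f a w l 0 = if l == a then B 0 0 else 0.
  by move/matrixP/(_ l 0): colN; rewrite !mxE eqxx andbT mulr_natr mulrb.
have w0 : w 0 = B 0 0 by have := N_col0 a; rewrite mxE eqxx.
have f0 : f 0 = None.
  case f0l: (f 0) => [l|] //; have la : l != a by apply: contraNneq (ft.2 0) => <-; rewrite f0l.
  have := N_col0 l; rewrite matching_mx_rowE // mxE f0l eqxx (negbTE la) addr0.
  by move/eqP; rewrite oner_eq0.
have w_first j : w j != 0 -> (forall k : 'I_n.+1, (k < j)%N -> w k = 0) -> f j = None.
  move=> _ w_lt; case: (j =P 0) => [->//|/eqP j0].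
  by have := w_lt 0; rewrite lt0n j0 w0 => /(_ isT) /eqP; rewrite (negbTE (UB.2 0)).
have [g mg simg] := normalize_row mf ft wa w_tgt w_first.
by exists g => //; apply: utrig_similar_trans simD1 (utrig_similar_trans _ simg); exists B.
Qed.

End InductionStep.

Lemma sqr0_utrig_similar_matching m (D : 'M[F]_m) :
  D *m D = 0 -> exists2 f, matching f & utrig_similar D (matching_mx f).
Proof.
elim: m D => [|n IH] D DD.
  exists (fun=> None); first by split.
  by exists 1%:M; [exact: utrig1 | apply/matrixP => -[]].
have [/forallP D0 | /forallPn [a0 Da0]] := boolP [forall i, D i 0 == 0].
  by apply: zero_first_column => // i; apply/eqP.
exact: nonzero_first_column Da0.
Qed.

Lemma perm_conj_mxE m (s : 'S_m) (M : 'M[F]_m) :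
  invmx (perm_mx s^-1) *m M *m perm_mx s^-1 = \matrix_(i, j) M (s i) (s j).
Proof.
have -> : invmx (perm_mx s^-1) = perm_mx s :> 'M[F]_m.
  have inv_s : perm_mx s^-1 *m perm_mx s = 1%:M :> 'M[F]_m.
    by rewrite -perm_mxM mulVg perm_mx1.
  by rewrite -[RHS](mulKmx (unitmx_perm _ s^-1)) inv_s mulmx1.
by rewrite -row_permE -col_permE; apply/matrixP => i j; rewrite !mxE.
Qed.

Lemma jordan_of_pairs m r i j :
  jordan_of F m (nseq r 2 ++ nseq (m - r.*2) 1)%N i j =
  if [&& ~~ odd i, (i < r.*2)%N & j == i.+1 :> nat] then 1 else 0.
Proof.
set s := (nseq r 2 ++ _)%N.
have sumn_take k : (k <= r)%N -> sumn (take k s) = k.*2.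
  move=> kr; rewrite take_cat size_nseq; case: ltnP => [/ltnW kr'|rk].
    by rewrite take_nseq // sumn_nseq mul2n.
  have -> : k = r by apply/eqP; rewrite eqn_leq kr.
  by rewrite subnn take0 cats0 sumn_nseq mul2n.
rewrite mxE; congr (if _ then _ else _); apply/existsP/idP.
  case=> k /and3P [/eqP nth_k /eqP i_k /eqP j_i].
  have kr : (k < r)%N.
    by move: nth_k; rewrite nth_cat size_nseq !nth_nseq; case: ifP => //; case: ifP.
  rewrite j_i eqxx andbT.
  move: i_k; rewrite sumn_take; last exact: ltnW.
  by move=> <-; rewrite odd_double ltn_double kr.
case/and3P => even_i ir /eqP j_i.
have i_half : i = i./2.*2 :> nat by rewrite -[LHS]odd_double_half (negbTE even_i).
have kr : (i./2 < r)%N by rewrite ltn_half_double.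
have ks : (i./2 < size s)%N by rewrite size_cat size_nseq (leq_trans kr) ?leq_addr.
exists (Ordinal ks); rewrite [nat_of_ord _]/= nth_cat size_nseq kr nth_nseq kr.
rewrite sumn_take; last exact: ltnW.
by rewrite -i_half j_i !eqxx.
Qed.

Section AlmostJordan.

Variables (m : nat) (f : 'I_m -> option 'I_m).
Hypothesis mf : matching f.

Let src := [set j | f j != None].
Let tgt := [set a | [exists j, f j == Some a]].
Let free := ~: (src :|: tgt).
Let r := #|src|.
Let srcs := enum src.
Let frees := enum free.

Lemma in_tgt j a : f j = Some a -> a \in tgt.
Proof. by move=> fj; rewrite inE; apply/existsP; exists j; rewrite fj. Qed.

Lemma tgt_notin_src a : a \in tgt -> a \notin src.
Proof. by rewrite !inE => /existsP [j /eqP /mf.1 ->]. Qed.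

Lemma card_src_tgt_free : (r.*2 + #|free|)%N = m.
Proof.
have tgt_img : tgt = [set odflt j (f j) | j in src].
  apply/setP => a; apply/idP/imsetP => [|[j]].
    by rewrite inE => /existsP [j /eqP fj]; exists j; rewrite ?inE ?fj.
  by rewrite inE; case fj: (f j) => [b|] // _ ->; apply: in_tgt fj.
have card_tgt : #|tgt| = r.
  rewrite tgt_img card_in_imset // => i j; rewrite !inE.
  case fi: (f i) => [a|] //; case fj: (f j) => [b|] // _ _ /= ab.
  by apply: mf.2 fi _; rewrite fj ab.
have src_tgt0 : src :&: tgt = set0.
  apply/disjoint_setI0; rewrite disjoint_sym disjoint_subset.
  by apply/subsetP => a /tgt_notin_src; rewrite !inE.
have := cardsC (src :|: tgt).
by rewrite cardsU src_tgt0 cards0 subn0 card_tgt addnn card_ord.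
Qed.

(* The relabelling [f s_0, s_0, f s_1, s_1, ..., u_0, u_1, ...], where the
   [s_k] enumerate the sources of [f] and the [u_k] the unmatched indices. *)
Let label (p : 'I_m) : 'I_m :=
  if (p < r.*2)%N then
    let s := nth p srcs p./2 in if odd p then s else odflt p (f s)
  else nth p frees (p - r.*2).

Lemma size_srcs : size srcs = r. Proof. by rewrite -cardE. Qed.

Lemma label_pair (p : 'I_m) : (p < r.*2)%N ->
  let s := nth p srcs p./2 in
  s \in src /\ (if odd p then label p = s else f s = Some (label p)).
Proof.
move=> pr s; have s_src : s \in src.
  by rewrite -mem_enum mem_nth // size_srcs ltn_half_double.
split=> //; rewrite /label pr; case: (odd p) => //.
by move: s_src; rewrite inE /s; case: (f _).
Qed.

Lemma frees_index (p : 'I_m) : (r.*2 <= p)%N -> (p - r.*2 < size frees)%N.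
Proof. by move=> pr; rewrite -cardE ltn_subLR // card_src_tgt_free. Qed.

Lemma label_free (p : 'I_m) : (r.*2 <= p)%N -> label p \in free.
Proof. by move=> pr; rewrite /label ltnNge pr /= -mem_enum mem_nth ?frees_index. Qed.

Lemma label_class p :
  (label p \in src) = (p < r.*2)%N && odd p /\
  (label p \in tgt) = (p < r.*2)%N && ~~ odd p.
Proof.
case: (ltnP p r.*2) => pr /=; last first.
  by move: (label_free pr); rewrite !inE negb_or => /andP[/negbTE -> /negbTE ->].
have [s_src] := label_pair pr; case: (odd p) => /= lp.
  by rewrite lp s_src (contraTF (@tgt_notin_src _) s_src).
by have lp_tgt := in_tgt lp; rewrite lp_tgt (negbTE (tgt_notin_src lp_tgt)).
Qed.

Lemma srcs_index (p : 'I_m) : (p < r.*2)%N -> (p./2 < size srcs)%N.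
Proof. by rewrite size_srcs ltn_half_double. Qed.

Lemma label_inj : injective label.
Proof.
move=> p q e; have [srcp _] := label_class p; have [srcq _] := label_class q.
have in_pairs x : (label x \in src) || (label x \in tgt) = (x < r.*2)%N.
  by have [-> ->] := label_class x; rewrite -andb_orr orbN andbT.
case: (ltnP p r.*2) => pr.
  have qr : (q < r.*2)%N by rewrite -in_pairs -e in_pairs.
  have op : odd p = odd q by move: srcp; rewrite e srcq pr qr /= => ->.
  have s_eq : nth p srcs p./2 = nth p srcs q./2.
    have [_ lp] := label_pair pr; have [_ lq] := label_pair qr.
    rewrite [nth q _ _](set_nth_default p) ?srcs_index // -op in lq.
    case: (odd p) in lp lq *; first by rewrite -lp -lq e.
    by apply: mf.2 lp _; rewrite lq e.
  have half_eq : p./2 = q./2.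
    by apply/eqP; rewrite -(nth_uniq p (srcs_index pr) (srcs_index qr) (enum_uniq _)) s_eq.
  by apply/val_inj; rewrite -[val p]odd_double_half -[val q]odd_double_half op half_eq.
have qr : (r.*2 <= q)%N by rewrite leqNgt -in_pairs -e in_pairs -leqNgt.
move: e; rewrite /label ltnNge pr ltnNge qr /= (set_nth_default p) ?frees_index //.
move/eqP; rewrite nth_uniq ?frees_index ?enum_uniq // => /eqP /(congr1 (addn r.*2)).
by rewrite !subnKC // => /val_inj.
Qed.

Lemma matching_mx_label i j :
  matching_mx f (label i) (label j) =
  if [&& ~~ odd i, (i < r.*2)%N & j == i.+1 :> nat] then 1 else 0.
Proof.
rewrite mxE; congr (if _ then _ else _); apply/eqP/idP => [fj | /and3P [even_i ir /eqP j_i]].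
  have [src_j _] := label_class j; have [_ tgt_i] := label_class i.
  move: src_j tgt_i; rewrite (in_tgt fj) inE fj.
  move=> /esym/andP [jr odd_j] /esym/andP [ir even_i]; rewrite even_i ir /=.
  have [_ li] := label_pair ir; have [_ lj] := label_pair jr.
  rewrite (negbTE even_i) in li; rewrite odd_j in lj.
  have s_eq : nth j srcs j./2 = nth j srcs i./2.
    by rewrite -lj (set_nth_default i) ?srcs_index //; apply: mf.2 fj li.
  move/eqP: s_eq; rewrite nth_uniq ?srcs_index ?enum_uniq // => /eqP half_eq.
  by rewrite -[val j]odd_double_half -[val i]odd_double_half odd_j (negbTE even_i) half_eq.
have half_ji : j./2 = i./2 by rewrite j_i /= uphalf_half (negbTE even_i).
have jr : (j < r.*2)%N by rewrite -ltn_half_double half_ji ltn_half_double.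
have [_ li] := label_pair ir; have [_ lj] := label_pair jr.
have odd_j : odd j by rewrite j_i /= even_i.
rewrite (negbTE even_i) in li; rewrite odd_j in lj.
by rewrite lj half_ji (set_nth_default i) ?srcs_index.
Qed.

Lemma matching_mx_almost_jordan : almost_jordan (matching_mx f).
Proof.
exists (perm label_inj)^-1%g; rewrite perm_conj_mxE.
exists (nseq r 2 ++ nseq (m - r.*2) 1)%N; split.
- by rewrite all_cat !all_nseq /= eqxx !orbT.
- rewrite sumn_cat !sumn_nseq mul1n mul2n subnKC //.
  by rewrite -[X in (_ <= X)%N]card_src_tgt_free leq_addr.
- by apply/matrixP => i j; rewrite jordan_of_pairs mxE !permE matching_mx_label.
Qed.

End AlmostJordan.

End DifferentialMatrices.

Theorem theorem1p2 (F : fieldType) (m : nat) (D : 'M[F]_m) :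
  differential D ->
  exists (Dbar B : 'M[F]_m),
    [/\ differential Dbar, almost_jordan Dbar, triangular B &
        D = B *m Dbar *m invmx B].
Proof.
move=> DD; have [f mf [B UB eB]] := sqr0_utrig_similar_matching DD.
exists (matching_mx F f), B; split.
- exact: matching_mx_sqr0.
- exact: matching_mx_almost_jordan.
- exact: utrig_triangular.
- by rewrite -eB mulmxK // utrig_unitmx.
Qed.
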